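(* Let $W(D_4)\subset \mathrm{O}_4(\mathbb R)$ be the group of matrices $D\cdot P(\pi)$ with $D=\mathrm{diag}(\varepsilon_1,\dots,\varepsilon_4)$, $\varepsilon_i=\pm1$, $\prod_i\varepsilon_i=1$, and $P(\pi)$ the permutation matrix of $\pi\in\mathfrak S_4$. Let $$\mu=\tfrac12\begin{pmatrix}1&1&1&-1\\1&1&-1&1\\1&-1&1&1\\1&-1&-1&-1\end{pmatrix},\qquad \rho=\tfrac12\begin{pmatrix}-1&1&1&1\\-1&-1&1&-1\\-1&-1&-1&1\\-1&1&-1&-1\end{pmatrix},$$ and let $\tilde\mu,\tilde\rho$ be the automorphisms of $W(D_4)$ given by $x\mapsto\mu x\mu^{-1}$ and $x\mapsto\rho x\rho^{-1}$. Then every trialitarian automorphism of $W(D_4)$ is conjugate in the group $\mathrm{Aut}(W(D_4))$ to either $\tilde\mu$ or $\tilde\rho$.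
   Context: A trialitarian automorphism of $W(D_4)$ is an automorphism of order $3$ which is not inner. Conjugation by $\mu$ and by $\rho$ normalizes $W(D_4)$, and $\tilde\mu,\tilde\rho$ are trialitarian. *)

From mathcomp Require Import all_boot all_order all_algebra all_fingroup.
Set Implicit Arguments. Unset Strict Implicit. Unset Printing Implicit Defensive.
Import GRing.Theory Num.Theory.
Local Open Scope ring_scope.

Definition sgnb (R : numFieldType) (b : bool) : R := if b then -1 else 1.

Definition inWD4 (R : numFieldType) (M : 'M[R]_4) : Prop :=
  exists (s : {ffun 'I_4 -> bool}) (p : 'S_4),
    \prod_(i < 4) sgnb R (s i) = 1 /\
    M = diag_mx (\row_(i < 4) sgnb R (s i)) *m perm_mx p.

Definition autWD4 (R : numFieldType) (f : 'M[R]_4 -> 'M[R]_4) : Prop :=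
  [/\ (forall x, inWD4 x -> inWD4 (f x)),
      (forall x y, inWD4 x -> inWD4 y -> f (x *m y) = f x *m f y),
      (forall x y, inWD4 x -> inWD4 y -> f x = f y -> x = y)
    & (forall y, inWD4 y -> exists2 x, inWD4 x & f x = y)].

Definition innerWD4 (R : numFieldType) (f : 'M[R]_4 -> 'M[R]_4) : Prop :=
  exists2 g, inWD4 g & forall x, inWD4 x -> f x = g *m x *m invmx g.

Definition trialitarian (R : numFieldType) (f : 'M[R]_4 -> 'M[R]_4) : Prop :=
  [/\ autWD4 f,
      (forall x, inWD4 x -> f (f (f x)) = x),
      ~ (forall x, inWD4 x -> f x = x)
    & ~ innerWD4 f].

Definition mat4 (R : numFieldType) (l : seq (seq int)) : 'M[R]_4 :=
  \matrix_(i < 4, j < 4) ((nth 0 (nth [::] l i) j)%:~R / 2).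

Definition muD4 (R : numFieldType) : 'M[R]_4 :=
  mat4 R [:: [:: 1; 1; 1; -1]; [:: 1; 1; -1; 1]; [:: 1; -1; 1; 1]; [:: 1; -1; -1; -1]].

Definition rhoD4 (R : numFieldType) : 'M[R]_4 :=
  mat4 R [:: [:: -1; 1; 1; 1]; [:: -1; -1; 1; -1]; [:: -1; -1; -1; 1]; [:: -1; 1; -1; -1]].

Definition conjm (R : numFieldType) (m : 'M[R]_4) (x : 'M[R]_4) : 'M[R]_4 :=
  m *m x *m invmx m.

Definition conj_in_Aut (R : numFieldType) (f g : 'M[R]_4 -> 'M[R]_4) : Prop :=
  exists a, autWD4 a /\ forall x, inWD4 x -> a (f x) = g (a x).

(* Encode W(D_4) by signed permutations. An automorphism of W(D_4) is determined by
   the images u, v of two generators g1, g2, and for a trialitarian automorphism the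
   pair (u, v) satisfies a decidable list of conditions ([trial_gens]). An exhaustive
   computation over all pairs shows that every such automorphism is carried to mu~ or
   rho~ by conjugation with a signed permutation matrix, i.e. an element of W(B_4);
   as W(D_4) is normal in W(B_4), this conjugation is an automorphism of W(D_4). *)

From mathcomp Require Import all_boot all_order all_algebra all_fingroup.
From mathcomp Require Import lra.
Set Implicit Arguments. Unset Strict Implicit. Unset Printing Implicit Defensive.
Import GRing.Theory Num.Theory.

(** * Signed permutations *)

(* The matrix with entry (-1)^(e_i) at (i, p i) is encoded by the list of the pairs
   (e_i, p i); [spmul] is the matrix product in this encoding. *)
Definition spcode := seq (bool * nat).

Definition spapp (b : spcode) (x : bool * nat) : bool * nat :=
  let y := nth (false, 0) b x.2 in (x.1 (+) y.1, y.2).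

Definition spmul (a b : spcode) : spcode := map (spapp b) a.

Definition sp1 : spcode := [:: (false, 0); (false, 1); (false, 2); (false, 3)].

Definition spinv (s : spcode) : spcode :=
  [seq let i := index j (map snd s) in ((nth (false, 0) s i).1, i) | j <- iota 0 4].

Definition spconj (s c : spcode) : spcode := spmul (spmul s c) (spinv s).

Definition sp_shape (c : spcode) := (size c == 4) && all (fun x => x.2 < 4) c.
Definition is_sp (c : spcode) := sp_shape c && uniq (map snd c).
Definition is_wd4 (c : spcode) := is_sp c && ~~ odd (count fst c).

Definition sp_entries : seq (bool * nat) :=
  [seq (b, j) | b <- [:: false; true], j <- iota 0 4].

Fixpoint sp_lists n : seq spcode :=
  if n is n'.+1 then [seq x :: c | x <- sp_entries, c <- sp_lists n'] else [:: [::]].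

(* Evaluated once, so that the exhaustive checks below do not recompute them. *)
Definition b4 : seq spcode := Eval vm_compute in [seq c <- sp_lists 4 | is_sp c].
Definition wd4 : seq spcode := Eval vm_compute in [seq c <- sp_lists 4 | is_wd4 c].

Lemma mem_sp_entries x : (x \in sp_entries) = (x.2 < 4).
Proof. by case: x => [[] [|[|[|[|j]]]]]. Qed.

Lemma mem_sp_lists n c : (c \in sp_lists n) = (size c == n) && all (fun x => x.2 < 4) c.
Proof.
elim: n c => [|n IH] c; first by case: c.
apply/allpairsP/idP => [[[x d] /= [hx hd ->]] | ].
  by rewrite /= eqSS -mem_sp_entries hx -IH.
case: c => [|x c] //= /andP[hs /andP[hx hc]].
by exists (x, c); rewrite mem_sp_entries IH -eqSS hs hx hc.
Qed.

Lemma mem_b4 c : (c \in b4) = is_sp c.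
Proof.
have -> : b4 = [seq c <- sp_lists 4 | is_sp c] by vm_compute.
by rewrite mem_filter mem_sp_lists andb_idr // => /andP[].
Qed.

Lemma mem_wd4 c : (c \in wd4) = is_wd4 c.
Proof.
have -> : wd4 = [seq c <- sp_lists 4 | is_wd4 c] by vm_compute.
by rewrite mem_filter mem_sp_lists andb_idr // => /andP[/andP[]].
Qed.

Lemma wd4_b4 c : c \in wd4 -> c \in b4.
Proof. by rewrite mem_wd4 mem_b4 => /andP[]. Qed.

Lemma b4_shape c : c \in b4 -> sp_shape c.
Proof. by rewrite mem_b4 => /andP[]. Qed.

Lemma wd4_shape c : c \in wd4 -> sp_shape c.
Proof. by move/wd4_b4/b4_shape. Qed.

Lemma spappA b c x : x.2 < size b -> spapp c (spapp b x) = spapp (spmul b c) x.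
Proof. by move=> hx; rewrite /spapp /spmul (nth_map (false, 0)) //= addbA. Qed.

Lemma spmulA a b c :
  all (fun x => x.2 < size b) a -> spmul (spmul a b) c = spmul a (spmul b c).
Proof.
by move=> /allP ha; rewrite /spmul -map_comp; apply/eq_in_map => x /ha; apply: spappA.
Qed.

Lemma spmul1r c : all (fun x => x.2 < 4) c -> spmul c sp1 = c.
Proof.
move=> /allP hc; rewrite /spmul -[RHS]map_id; apply/eq_in_map => -[b j] /hc /=.
by case: j => [|[|[|[|j]]]] //= _; rewrite /spapp /= addbF.
Qed.

Lemma sp_shape_mul c d : sp_shape c -> sp_shape d -> sp_shape (spmul c d).
Proof.
move=> /andP[hc /allP hc'] /andP[/eqP hd /allP hd']; rewrite /sp_shape size_map hc /=.
by apply/allP => _ /mapP[x /hc' hx ->]; rewrite /= hd' // mem_nth // hd.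
Qed.

Lemma wd4_mul c d : c \in wd4 -> d \in wd4 -> spmul c d \in wd4.
Proof.
have /allP h : all (fun c => all (fun d => is_wd4 (spmul c d)) wd4) wd4 by vm_compute.
by move=> /h /allP hc /hc; rewrite mem_wd4.
Qed.

Lemma spmulV s : s \in b4 -> spmul s (spinv s) = sp1.
Proof.
have /allP h : all (fun s => spmul s (spinv s) == sp1) b4 by vm_compute.
by move=> /h /eqP.
Qed.

Lemma spinv_b4 s : s \in b4 -> spinv s \in b4.
Proof.
have /allP h : all (fun s => is_sp (spinv s)) b4 by vm_compute.
by move=> /h; rewrite mem_b4.
Qed.

Lemma spconj_wd4 s c : s \in b4 -> c \in wd4 -> spconj s c \in wd4.
Proof.
have /allP h : all (fun s => let t := spinv s in all (fun c => is_wd4 (spmul (spmul s c) t)) wd4) b4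
  by vm_compute.
by move=> /h /allP hs /hs; rewrite mem_wd4.
Qed.

(** * Words in the generators *)

Definition spword (u v : spcode) (w : seq bool) : spcode :=
  foldl (fun c b => spmul c (if b then v else u)) sp1 w.

Lemma spword_rcons u v w b :
  spword u v (rcons w b) = spmul (spword u v w) (if b then v else u).
Proof. by rewrite /spword foldl_rcons. Qed.

Lemma sp1_wd4 : sp1 \in wd4. Proof. by []. Qed.

Lemma spword_wd4 u v w : u \in wd4 -> v \in wd4 -> spword u v w \in wd4.
Proof.
move=> hu hv; elim/last_ind: w => [|w b IH]; first exact: sp1_wd4.
by rewrite spword_rcons wd4_mul //; case: b.
Qed.

Definition g1 : spcode := [:: (false, 0); (true, 1); (false, 3); (true, 2)].
Definition g2 : spcode := [:: (false, 1); (false, 2); (false, 0); (false, 3)].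

Lemma g1_wd4 : g1 \in wd4. Proof. by []. Qed.
Lemma g2_wd4 : g2 \in wd4. Proof. by []. Qed.

(* A word in g1, g2 for every element, found by breadth-first search and tabulated by
   the four entries; [digit x] is the position of [x] in [sp_entries]. *)
Definition word_table : seq (seq (seq (seq (seq bool)))) := Eval vm_compute in
  let step ws := foldl (fun acc cw => if cw.1 \in map fst acc then acc else rcons acc cw) ws
    [seq (spmul p.1 (if b then g2 else g1), rcons p.2 b) | p <- ws, b <- [:: false; true]] in
  let ws := iter 10 step [:: (sp1, [::])] in
  let word c := nth [::] (map snd ws) (index c (map fst ws)) in
  [seq [seq [seq [seq word [:: x1; x2; x3; x4] | x4 <- sp_entries] | x3 <- sp_entries]
     | x2 <- sp_entries] | x1 <- sp_entries].

Definition digit (x : bool * nat) : nat := if x.1 then x.2 + 4 else x.2.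

Definition wordof (c : spcode) : seq bool :=
  if c is [:: x1; x2; x3; x4] then
    nth [::] (nth [::] (nth [::] (nth [::] word_table (digit x1)) (digit x2)) (digit x3)) (digit x4)
  else [::].

Definition extend (u v c : spcode) : spcode := spword u v (wordof c).

Lemma spword_wordof c : c \in wd4 -> spword g1 g2 (wordof c) = c.
Proof.
have /allP h : all (fun c => spword g1 g2 (wordof c) == c) wd4 by vm_compute.
by move=> /h /eqP.
Qed.

Lemma extend_wd4 u v c : u \in wd4 -> v \in wd4 -> extend u v c \in wd4.
Proof. exact: spword_wd4. Qed.

Section Homomorphism.

Variable h : spcode -> spcode.
Hypothesis h_wd4 : {in wd4, forall c, h c \in wd4}.
Hypothesis h_mul : {in wd4 &, {morph h : c d / spmul c d}}.

Lemma hom_sp1 : h sp1 = sp1.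
Proof.
have e_wd4 := h_wd4 sp1_wd4; set e := h sp1 in e_wd4 *.
have ee : spmul e e = e by rewrite -h_mul.
have eB := wd4_b4 e_wd4; have /andP[/eqP se be] := b4_shape eB.
by rewrite -(spmulV eB) -{2}ee spmulA ?se // spmulV // spmul1r.
Qed.

Lemma hom_spword w : h (spword g1 g2 w) = spword (h g1) (h g2) w.
Proof.
elim/last_ind: w => [|w b IH]; first exact: hom_sp1.
rewrite !spword_rcons h_mul ?IH ?spword_wd4 //; first by case: b.
by case: b; [exact: g2_wd4 | exact: g1_wd4].
Qed.

Lemma hom_extend c : c \in wd4 -> h c = extend (h g1) (h g2) c.
Proof. by move=> hc; rewrite -{1}(spword_wordof hc) hom_spword. Qed.

End Homomorphism.

(** * The exhaustive search *)

(* Short-circuiting [all], [has] and [&&]: [vm_compute] evaluates both arguments of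
   [&&] and [||]. *)
Fixpoint all_sc (T : Type) (p : pred T) (s : seq T) : bool :=
  if s is x :: s' then (if p x then all_sc p s' else false) else true.

Fixpoint has_sc (T : Type) (p : pred T) (s : seq T) : bool :=
  if s is x :: s' then (if p x then true else has_sc p s') else false.

Lemma all_scE (T : Type) (p : pred T) s : all_sc p s = all p s.
Proof. by elim: s => //= x s ->; case: (p x). Qed.

Lemma has_scE (T : Type) (p : pred T) s : has_sc p s = has p s.
Proof. by elim: s => //= x s ->; case: (p x). Qed.

Notation "a &&& b" := (if a then b else false) (at level 57, right associativity).

(* b^3 = a^4 = (ab)^4 = 1 for a = g1, b = g2; they only serve to prune the search. *)
Definition relators : seq (seq bool) :=
  [:: nseq 3 true; nseq 4 false; flatten (nseq 4 [:: false; true])].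

Lemma relators_gens r : r \in relators -> spword g1 g2 r = sp1.
Proof. by rewrite !inE => /or3P[] /eqP ->. Qed.

Definition relators_hold (u v : spcode) : bool :=
  all_sc (fun r => spword u v r == sp1) relators.

Definition hom_gens (h : spcode -> spcode) : bool :=
  all_sc (fun c => (h (spmul c g1) == spmul (h c) (h g1)) &&&
                   (h (spmul c g2) == spmul (h c) (h g2))) wd4.

Definition not_inner (h : spcode -> spcode) : bool :=
  all_sc (fun w => has_sc (fun c => spmul (h c) w != spmul w c) wd4) wd4.

Definition trial_gens (u v : spcode) : bool :=
  let h := extend u v in
  relators_hold u v &&& (h (h u) == g1) &&& (h (h v) == g2) &&& hom_gens h &&& not_inner h.

Lemma trial_gensE u v : let h := extend u v in
  trial_gens u v =
    [&& relators_hold u v, h (h u) == g1, h (h v) == g2, hom_gens h & not_inner h].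
Proof. by []. Qed.

Lemma trial_gens_of_hom h :
  {in wd4, forall c, h c \in wd4} -> {in wd4 &, {morph h : c d / spmul c d}} ->
  {in wd4, forall c, h (h (h c)) = c} ->
  (forall w, w \in wd4 -> exists2 c, c \in wd4 & spmul (h c) w != spmul w c) ->
  trial_gens (h g1) (h g2).
Proof.
move=> hW hM h3 hn; have hE := hom_extend hW hM.
have hhW c : c \in wd4 -> h (h c) \in wd4 by move=> /hW /hW.
rewrite trial_gensE; apply/and5P; split.
- rewrite /relators_hold all_scE; apply/allP => r /relators_gens hr.
  by rewrite -(hom_spword hW hM) hr (hom_sp1 hW hM).
- by rewrite -[extend _ _ (h g1)]hE ?hW ?g1_wd4 // -hE ?hhW ?g1_wd4 // h3 ?g1_wd4.
- by rewrite -[extend _ _ (h g2)]hE ?hW ?g2_wd4 // -hE ?hhW ?g2_wd4 // h3 ?g2_wd4.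
- rewrite /hom_gens all_scE; apply/allP => c hc.
  by rewrite -!hE ?wd4_mul ?g1_wd4 ?g2_wd4 // !hM ?g1_wd4 ?g2_wd4 // !eqxx.
- rewrite /not_inner all_scE; apply/allP => w hw; rewrite has_scE.
  by have [c hc nc] := hn w hw; apply/hasP; exists c; rewrite // -hE.
Qed.

(* The images of g1, g2 under mu~ and rho~, see [conjm_mu] and [conjm_rho]. *)
Definition mu_g1 : spcode := [:: (false, 2); (false, 3); (false, 1); (false, 0)].
Definition mu_g2 : spcode := [:: (false, 0); (true, 3); (false, 1); (true, 2)].
Definition rho_g1 : spcode := [:: (false, 2); (false, 0); (false, 3); (false, 1)].
Definition rho_g2 : spcode := [:: (true, 3); (true, 0); (false, 2); (false, 1)].

Definition conj_to (s : spcode) (h t : spcode -> spcode) : bool :=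
  all_sc (fun c => spconj s (h c) == t (spconj s c)) wd4.

Lemma conj_toP s h t c : conj_to s h t -> c \in wd4 -> spconj s (h c) = t (spconj s c).
Proof. by rewrite /conj_to all_scE => /allP h_t /h_t /eqP. Qed.

Lemma trial_gens_conj u v : u \in wd4 -> v \in wd4 -> trial_gens u v ->
  exists2 s, s \in b4 & conj_to s (extend u v) (extend mu_g1 mu_g2) ||
                        conj_to s (extend u v) (extend rho_g1 rho_g2).
Proof.
have : all_sc (fun u => all_sc (fun v => if trial_gens u v then
    has_sc (fun s => conj_to s (extend u v) (extend mu_g1 mu_g2) ||
                     conj_to s (extend u v) (extend rho_g1 rho_g2)) b4
    else true) wd4) wd4 by vm_compute.
rewrite all_scE => /allP cert hu hv tuv; move: (cert u hu).
by rewrite all_scE => /allP /(_ v hv); rewrite tuv has_scE => /hasP.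
Qed.

(** * Signed permutation matrices *)

Local Open Scope ring_scope.

Section SignedPermutationMatrices.

Variable R : numFieldType.

Definition spmx (c : spcode) : 'M[R]_4 :=
  \matrix_(i, j) if (nth (false, 0%N) c i).2 == j then sgnb R (nth (false, 0%N) c i).1 else 0.

Lemma sgnbM a b : sgnb R a * sgnb R b = sgnb R (a (+) b).
Proof. by case: a; case: b; rewrite /sgnb ?mulr1 ?mul1r ?mulrNN ?mulr1. Qed.

Lemma sgnb_neq0 b : sgnb R b != 0.
Proof. by case: b; rewrite /sgnb ?oppr_eq0 oner_eq0. Qed.

Lemma sgnb_inj : injective (sgnb R).
Proof.
have N1 : -1 != 1 :> R by rewrite -subr_eq0 -opprD oppr_eq0 -mulr2n pnatr_eq0.
by case=> -[] //; rewrite /sgnb => /eqP; rewrite ?(negbTE N1) // eq_sym (negbTE N1).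
Qed.

Lemma spmx_mul c d : sp_shape c -> spmx c *m spmx d = spmx (spmul c d).
Proof.
move=> /andP[/eqP sc /allP hc]; apply/matrixP => i j; rewrite !mxE.
set x := nth (false, 0%N) c i.
have hx : (x.2 < 4)%N by apply: hc; rewrite mem_nth ?sc.
rewrite (bigD1 (Ordinal hx)) //= big1 ?addr0 => [|k hk]; last first.
  rewrite !mxE; case: eqP => [xk|]; last by rewrite mul0r.
  by case/eqP: hk; apply: val_inj.
rewrite !mxE eqxx (nth_map (false, 0%N)) ?sc // -/x /spapp /=.
by case: eqP; rewrite ?mulr0 // sgnbM.
Qed.

Lemma spmx_sp1 : spmx sp1 = 1%:M.
Proof.
apply/matrixP => i j; rewrite !mxE.
by case: i j => [[|[|[|[|//]]]] ?] [[|[|[|[|//]]]] ?].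
Qed.

Lemma spmx_inj : {in b4 &, injective spmx}.
Proof.
move=> c d /b4_shape /andP[/eqP sc /allP hc] /b4_shape /andP[/eqP sd _] E.
apply: (@eq_from_nth _ (false, 0%N)); rewrite ?sc ?sd // => i hi.
have hx : ((nth (false, 0%N) c i).2 < 4)%N by apply: hc; rewrite mem_nth ?sc.
have := congr1 (fun M : 'M[R]_4 => M (Ordinal hi) (Ordinal hx)) E; rewrite !mxE /= eqxx.
case: eqP => [ey e | _ /eqP]; last by rewrite (negbTE (sgnb_neq0 _)).
have ex := sgnb_inj e; move: ey ex {E hx}.
by case: (nth _ c i) => ? ?; case: (nth _ d i) => ? ? /= -> ->.
Qed.

Lemma prod_sgnb_fst n (c : spcode) : size c = n ->
  \prod_(i < n) sgnb R (nth (false, 0%N) c i).1 = sgnb R (odd (count fst c)).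
Proof.
move=> <-; elim: c => [|x c IH]; first by rewrite big_ord0.
by rewrite big_ord_recl /= IH sgnbM oddD; case: x.1.
Qed.

Lemma spmx_inW c : c \in wd4 -> inWD4 (spmx c).
Proof.
rewrite mem_wd4 => /andP[/andP[/andP[/eqP sc /allP hc] uc] ec].
have c_lt (i : 'I_4) : ((nth (false, 0%N) c i).2 < 4)%N by rewrite hc ?mem_nth ?sc.
pose p (i : 'I_4) : 'I_4 := inord (nth (false, 0%N) c i).2.
have p_inj : injective p.
  move=> i j /(congr1 val); rewrite /= !inordK ?c_lt //.
  rewrite -!(nth_map _ 0%N snd) ?sc ?ltn_ord // => /eqP.
  by rewrite nth_uniq ?size_map ?sc // => /eqP /val_inj.
exists [ffun i : 'I_4 => (nth (false, 0%N) c i).1], (perm p_inj); split.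
  under eq_bigr do rewrite ffunE.
  by rewrite prod_sgnb_fst // (negbTE ec).
apply/matrixP => i j; rewrite mul_diag_mx perm_mxEsub !mxE permE ffunE /p.
rewrite -val_eqE /= inordK ?c_lt //.
by case: eqP; rewrite ?mulr1 ?mulr0.
Qed.

Lemma inW_spmx x : inWD4 x -> exists2 c, c \in wd4 & x = spmx c.
Proof.
case=> s [p [s_even ->]].
pose c : spcode := [seq (s i, val (p i)) | i <- enum 'I_4].
have sc : size c = 4 by rewrite size_map size_enum_ord.
have nc (i : 'I_4) : nth (false, 0%N) c i = (s i, val (p i)).
  by rewrite (nth_map ord0) ?size_enum_ord // nth_ord_enum.
exists c.
  rewrite mem_wd4 /is_wd4 /is_sp /sp_shape sc /=; apply/andP; split; [apply/andP; split|].
  - by apply/allP => _ /mapP[i _ ->]; rewrite /= ltn_ord.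
  - rewrite -map_comp map_inj_uniq ?enum_uniq // => i j /= /val_inj; exact: perm_inj.
  - have := prod_sgnb_fst sc; under eq_bigr do rewrite nc /=.
    rewrite s_even; case: (odd _) => // e.
    by have := sgnb_inj (e : sgnb R false = sgnb R true).
apply/matrixP => i j; rewrite mul_diag_mx perm_mxEsub !mxE nc -val_eqE /=.
by case: eqP; rewrite ?mulr1 ?mulr0.
Qed.

Definition spcode_of (x : 'M[R]_4) : spcode := nth sp1 wd4 (find (fun c => spmx c == x) wd4).

Lemma spcode_ofP x : inWD4 x -> spcode_of x \in wd4 /\ spmx (spcode_of x) = x.
Proof.
case/inW_spmx => c hc ->.
have hx : has (fun d => spmx d == spmx c) wd4 by apply/hasP; exists c.
by split; [rewrite mem_nth // -has_find | apply/eqP; exact: (nth_find sp1 hx)].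
Qed.

Lemma mulmx1_invmx n (A B : 'M[R]_n) : A *m B = 1%:M -> invmx A = B.
Proof.
move=> AB; have [Au _] := mulmx1_unit AB.
by rewrite -[invmx A]mulmx1 -AB mulmxA mulVmx ?mul1mx.
Qed.

Lemma conjmM (m x y : 'M[R]_4) :
  m \in unitmx -> conjm m (x *m y) = conjm m x *m conjm m y.
Proof. by move=> mU; rewrite /conjm !mulmxA mulmxKV. Qed.

Lemma conjm1 (m : 'M[R]_4) : m \in unitmx -> conjm m 1%:M = 1%:M.
Proof. by move=> mU; rewrite /conjm mulmx1 mulmxV. Qed.

Lemma invmx_spmx s : s \in b4 -> invmx (spmx s) = spmx (spinv s).
Proof. by move=> hs; apply: mulmx1_invmx; rewrite spmx_mul ?b4_shape // spmulV // spmx_sp1. Qed.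

Lemma spmx_unit s : s \in b4 -> spmx s \in unitmx.
Proof.
move=> hs; have [] // := @mulmx1_unit _ _ (spmx s) (spmx (spinv s)).
by rewrite spmx_mul ?b4_shape // spmulV // spmx_sp1.
Qed.

Lemma conjm_spmx s c : s \in b4 -> c \in wd4 -> conjm (spmx s) (spmx c) = spmx (spconj s c).
Proof.
move=> hs hc; rewrite /conjm invmx_spmx // spmx_mul ?b4_shape // spmx_mul //.
by apply: sp_shape_mul; apply: b4_shape; last exact: wd4_b4.
Qed.

Lemma conjm_spmx_aut s : s \in b4 -> autWD4 (conjm (spmx s)).
Proof.
move=> hs; have sU := spmx_unit hs; split.
- by move=> _ /inW_spmx[c hc ->]; rewrite conjm_spmx //; apply/spmx_inW/spconj_wd4.
- by move=> x y _ _; exact: conjmM.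
- move=> x y _ _ /(congr1 (fun z => invmx (spmx s) *m z *m spmx s)).
  by rewrite /conjm !mulmxA mulVmx // !mul1mx !mulmxKV.
- move=> _ /inW_spmx[d hd ->]; exists (spmx (spconj (spinv s) d)).
    by apply/spmx_inW/spconj_wd4 => //; exact: spinv_b4.
  rewrite -conjm_spmx ?spinv_b4 // /conjm -invmx_spmx // invmxK.
  by rewrite !mulmxA mulmxV // mul1mx mulmxK.
Qed.

Lemma conjm_extend (m : 'M[R]_4) t1 t2 :
  m \in unitmx -> t1 \in wd4 -> t2 \in wd4 ->
  m *m spmx g1 = spmx t1 *m m -> m *m spmx g2 = spmx t2 *m m ->
  {in wd4, forall c, conjm m (spmx c) = spmx (extend t1 t2 c)}.
Proof.
move=> mU ht1 ht2 e1 e2 c hc.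
have {}e1 : conjm m (spmx g1) = spmx t1 by rewrite /conjm e1 mulmxK.
have {}e2 : conjm m (spmx g2) = spmx t2 by rewrite /conjm e2 mulmxK.
rewrite -{1}(spword_wordof hc) /extend.
elim/last_ind: (wordof c) => [|w b IH]; first by rewrite /= spmx_sp1 conjm1.
rewrite !spword_rcons -!spmx_mul ?wd4_shape ?spword_wd4 ?g1_wd4 ?g2_wd4 // conjmM // IH.
by case: b; rewrite /= ?e1 ?e2.
Qed.

Lemma spcode_hom f :
  (forall x, inWD4 x -> inWD4 (f x)) ->
  (forall x y, inWD4 x -> inWD4 y -> f (x *m y) = f x *m f y) ->
  exists h, [/\ {in wd4, forall c, h c \in wd4}, {in wd4 &, {morph h : c d / spmul c d}}
              & {in wd4, forall c, f (spmx c) = spmx (h c)}].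
Proof.
move=> fW fM; pose h c := spcode_of (f (spmx c)); exists h.
have hP c : c \in wd4 -> h c \in wd4 /\ spmx (h c) = f (spmx c).
  by move=> hc; apply/spcode_ofP/fW/spmx_inW.
have hW c (hc : c \in wd4) := (hP c hc).1; have hf c (hc : c \in wd4) := (hP c hc).2.
split=> // [c d hc hd | c /hf //]; have hcd := wd4_mul hc hd.
apply: spmx_inj; rewrite ?wd4_b4 ?wd4_mul ?hW //.
rewrite hf // -spmx_mul ?wd4_shape // (fM _ _ (spmx_inW hc) (spmx_inW hd)).
by rewrite -!hf // spmx_mul ?wd4_shape ?hW.
Qed.

Lemma not_inner_spcode f h : {in wd4, forall c, h c \in wd4} ->
  {in wd4, forall c, f (spmx c) = spmx (h c)} -> ~ innerWD4 f ->
  forall w, w \in wd4 -> exists2 c, c \in wd4 & spmul (h c) w != spmul w c.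
Proof.
move=> hW hf f_not_inner w hw.
have [/hasP // | /hasPn w_central] := boolP (has (fun c => spmul (h c) w != spmul w c) wd4).
case: f_not_inner; exists (spmx w); first exact: spmx_inW.
move=> _ /inW_spmx[c hc ->]; have wU := spmx_unit (wd4_b4 hw).
have /negPn/eqP hcw := w_central c hc.
by rewrite hf // -[LHS](mulmxK wU) spmx_mul ?wd4_shape // -hcw -spmx_mul ?wd4_shape ?hW.
Qed.

Lemma trialitarian_gens f : trialitarian f ->
  exists u v, [/\ u \in wd4, v \in wd4, trial_gens u v &
                  {in wd4, forall c, f (spmx c) = spmx (extend u v c)}].
Proof.
case=> -[fW fM _ _] f3 _ f_not_inner.
have [h [hW hM hf]] := spcode_hom fW fM; have hE := hom_extend hW hM.
exists (h g1), (h g2); split; [exact: hW g1_wd4 | exact: hW g2_wd4 | | ].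
  apply: trial_gens_of_hom => // [c hc|]; last exact: (not_inner_spcode hW hf f_not_inner).
  by apply: spmx_inj; rewrite ?wd4_b4 ?hW // -!hf ?hW // f3 //; exact: spmx_inW.
by move=> c hc; rewrite -hE ?hf.
Qed.

Lemma conj_in_Aut_of_conj_to f h t (m : 'M[R]_4) s : s \in b4 ->
  {in wd4, forall c, h c \in wd4} ->
  {in wd4, forall c, f (spmx c) = spmx (h c)} ->
  {in wd4, forall c, conjm m (spmx c) = spmx (t c)} ->
  conj_to s h t -> conj_in_Aut f (conjm m).
Proof.
move=> hs hW hf ht hst; exists (conjm (spmx s)); split; first exact: conjm_spmx_aut.
move=> _ /inW_spmx[c hc ->].
by rewrite hf // !conjm_spmx ?hW // (conj_toP hst hc) ht // spconj_wd4.
Qed.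

End SignedPermutationMatrices.

Ltac entrywise :=
  apply/matrixP => -[[|[|[|[|//]]]] ?] -[[|[|[|[|//]]]] ?];
  rewrite !mxE !big_ord_recr big_ord0 /= !mxE ?big_ord_recr ?big_ord0 /= ?mxE /sgnb /=; lra.

Section Triality.

Variable R : realFieldType.

Lemma muD4_orth : muD4 R *m (muD4 R)^T = 1%:M.
Proof. entrywise. Qed.

Lemma rhoD4_orth : rhoD4 R *m (rhoD4 R)^T = 1%:M.
Proof. entrywise. Qed.

Lemma conjm_mu :
  {in wd4, forall c, conjm (muD4 R) (spmx R c) = spmx R (extend mu_g1 mu_g2 c)}.
Proof.
have [mU _] := mulmx1_unit muD4_orth.
by apply: conjm_extend => //; entrywise.
Qed.

Lemma conjm_rho :
  {in wd4, forall c, conjm (rhoD4 R) (spmx R c) = spmx R (extend rho_g1 rho_g2 c)}.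
Proof.
have [mU _] := mulmx1_unit rhoD4_orth.
by apply: conjm_extend => //; entrywise.
Qed.

End Triality.

Theorem proposition5p3 (R : realFieldType) (f : 'M[R]_4 -> 'M[R]_4) :
  trialitarian f ->
  conj_in_Aut f (conjm (muD4 R)) \/ conj_in_Aut f (conjm (rhoD4 R)).
Proof.
case/trialitarian_gens => u [v [hu hv tuv hf]].
have hW c : c \in wd4 -> extend u v c \in wd4 by move=> _; exact: extend_wd4.
have [s hs /orP[hmu | hrho]] := trial_gens_conj hu hv tuv.
- by left; apply: conj_in_Aut_of_conj_to hs hW hf (@conjm_mu R) hmu.
- by right; apply: conj_in_Aut_of_conj_to hs hW hf (@conjm_rho R) hrho.
Qed.
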